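(* Let $(\mathbb{T}_n)$ be the sequence of dyadic partitions. (a) If $\bm f\in\mathscr{F}$, then $x_{\bm f}$ admits the continuous quadratic variation $\langle x_{\bm f}\rangle_t=\int_0^tf_\infty^2(s)\,ds$ for all $t\in[0,1]$. (b) If $\bm f,\bm g\in\mathscr{F}$, then $x_{\bm f}$ and $x_{\bm g}$ admit the continuous covariation $\langle x_{\bm f},x_{\bm g}\rangle_t=\int_0^tf_\infty(s)g_\infty(s)\,ds$ for all $t\in[0,1]$. In particular, $\{x_{\bm f}:\bm f\in\mathscr{F}\}$ is a vector space of functions admitting a continuous quadratic variation.
   Context: Dyadic partitions: $\mathbb{T}_n=\{k2^{-n}:k=0,\dots,2^n\}$. For $s\in\mathbb{T}_n$, $s'$ is the successor of $s$ in $\mathbb{T}_n$ ($s'=1$ if $s=1$). For $x,y\in C[0,1]$, $\langle x,y\rangle^n_t:=\sum_{s\in\mathbb{T}_n,\,s\le t}(x(s')-x(s))(y(s')-y(s))$, $\langle x\rangle^n_t:=\langle x,x\rangle^n_t$; the quadratic variation is $\langle x\rangle_t=\lim_n\langle x\rangle^n_t$ and the covariation is $\langle x,y\rangle_t=\lim_n\langle x,y\rangle^n_t$, whenever these limits exist. Faber--Schauder functions: $e_{0,0}(t)=\max\{0,\min\{t,1-t\}\}$, $e_{n,k}(t)=2^{-n/2}e_{0,0}(2^nt-k)$ for $n\ge1$, $k=0,\dots,2^n-1$. $\mathscr{F}$ is the class of sequences $\bm f=(f_n)_{n\ge0}$ of bounded functions $f_n:[0,1]\to\mathbb{R}$ converging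 uniformly to a Riemann integrable function $f_\infty$. For $\bm f\in\mathscr{F}$, $\theta_{n,k}(\bm f):=f_n(k2^{-n})$ and $x_{\bm f}:=\sum_{n=0}^\infty\sum_{k=0}^{2^n-1}\theta_{n,k}(\bm f)e_{n,k}$ (an absolutely convergent series defining a continuous function). *)

From Stdlib Require Import Reals.
From Coquelicot Require Import Coquelicot.
Open Scope R_scope.

Fixpoint sumk (F : nat -> R) (m : nat) : R :=
  match m with
  | O => 0
  | S m' => sumk F m' + F m'
  end.

Definition dyad (n k : nat) : R := INR k / 2 ^ n.

Definition e00 (t : R) : R := Rmax 0 (Rmin t (1 - t)).
Definition schauder (n k : nat) (t : R) : R :=
  / sqrt (2 ^ n) * e00 (2 ^ n * t - INR k).

Definition inF (f : nat -> R -> R) (finf : R -> R) : Prop :=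
  (forall n, exists M, forall t, 0 <= t <= 1 -> Rabs (f n t) <= M) /\
  (forall eps, 0 < eps -> exists N, forall n t, (N <= n)%nat -> 0 <= t <= 1 ->
       Rabs (f n t - finf t) < eps) /\
  ex_RInt finf 0 1.

Definition theta (f : nat -> R -> R) (n k : nat) : R := f n (dyad n k).

Definition xf (f : nat -> R -> R) (t : R) : R :=
  Series (fun n => sumk (fun k => theta f n k * schauder n k t) (2 ^ n)%nat).

(* <x,y>^n_t = sum_{s in T_n, s <= t} (x(s')-x(s))(y(s')-y(s));
   the term s = 1 has s' = 1 and contributes 0, so k ranges over 0..2^n-1 *)
Definition covar_n (x y : R -> R) (n : nat) (t : R) : R :=
  sumk (fun k => if Rle_dec (dyad n k) t
                 then (x (dyad n (S k)) - x (dyad n k)) * (y (dyad n (S k)) - y (dyad n k))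
                 else 0) (2 ^ n)%nat.

Definition qv_n (x : R -> R) (n : nat) (t : R) : R := covar_n x x n t.

Definition cont01 (F : R -> R) : Prop :=
  forall t, 0 <= t <= 1 ->
    filterlim F (within (fun u => 0 <= u <= 1) (locally t)) (locally (F t)).

(* The Schauder terms of [x_f] of level [< m] are affine on every dyadic interval of level [m],
   and those of level [> m] vanish at its endpoints and midpoint; so the midpoint value exceeds
   the mean of the endpoint values by exactly [theta_{m,k} 2^(-m/2) / 2]. The two increments of
   level [m + 1] are thus [D / 2 + c] and [D / 2 - c], and summing products over the intervals
   left of [t] gives [Q_{m+1} = (Q_m + R_m) / 2 + O(2^(-m))], where [R_m] is the dyadic Riemann
   sum of [f_m g_m] and the error comes from the single interval cut by [t] (all increments are
   [O(2^(-m/2))]). Uniform convergence sends [R_m] to the integral of [f_inf g_inf], and the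
   averaging recursion passes this limit on to [Q_m]. *)

From Stdlib Require Import Reals Lra Lia Arith FunctionalExtensionality.
From Coquelicot Require Import Coquelicot.
Open Scope R_scope.

Lemma sumk_ext F G n : (forall k, (k < n)%nat -> F k = G k) -> sumk F n = sumk G n.
Proof. induction n as [|n IH]; intros H; simpl; auto. rewrite IH, H; auto; intros; apply H; lia. Qed.

Lemma sumk0 n : sumk (fun _ => 0) n = 0.
Proof. induction n as [|n IH]; simpl; [|rewrite IH]; lra. Qed.

Lemma sumk_add F G n : sumk (fun k => F k + G k) n = sumk F n + sumk G n.
Proof. induction n as [|n IH]; simpl; [|rewrite IH]; lra. Qed.

Lemma sumk_sub F G n : sumk (fun k => F k - G k) n = sumk F n - sumk G n.
Proof. induction n as [|n IH]; simpl; [|rewrite IH]; lra. Qed.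

Lemma sumk_scal c F n : sumk (fun k => c * F k) n = c * sumk F n.
Proof. induction n as [|n IH]; simpl; [|rewrite IH]; lra. Qed.

Lemma sumk_shift F n : sumk F (S n) = F 0%nat + sumk (fun k => F (S k)) n.
Proof. induction n as [|n IH]; simpl in *; [|rewrite IH]; lra. Qed.

Lemma sumk_pairs F n : sumk F (2 * n) = sumk (fun k => F (2 * k)%nat + F (S (2 * k))) n.
Proof.
  induction n as [|n IH]; [reflexivity|].
  replace (2 * S n)%nat with (S (S (2 * n))) by lia. cbn -[Nat.mul]. rewrite IH. lra.
Qed.

Lemma sumk_abs_le F G n :
  (forall k, (k < n)%nat -> Rabs (F k) <= G k) -> Rabs (sumk F n) <= sumk G n.
Proof.
  induction n as [|n IH]; intros H; simpl; [rewrite Rabs_R0; lra|].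
  eapply Rle_trans; [apply Rabs_triang|].
  apply Rplus_le_compat; [apply IH; intros|]; apply H; lia.
Qed.

Lemma sumk_abs_triang F n : Rabs (sumk F n) <= sumk (fun k => Rabs (F k)) n.
Proof. apply sumk_abs_le. intros. apply Rle_refl. Qed.

Lemma sumk_abs_le_const F B n :
  (forall k, (k < n)%nat -> Rabs (F k) <= B) -> Rabs (sumk F n) <= INR n * B.
Proof.
  intros H. eapply Rle_trans; [apply (sumk_abs_le F (fun _ => B) n H)|].
  clear H. induction n as [|n IH]; simpl sumk; [simpl; lra|]. rewrite S_INR. lra.
Qed.

Lemma sumk_single F n k : (k < n)%nat ->
  (forall j, (j < n)%nat -> j <> k -> F j = 0) -> sumk F n = F k.
Proof.
  induction n as [|n IH]; intros Hk H; [lia|]. simpl.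
  destruct (Nat.eq_dec k n) as [->|Hkn].
  - rewrite (sumk_ext F (fun _ => 0)), sumk0; [lra|]. intros; apply H; lia.
  - rewrite IH, (H n); try lra; try lia. intros; apply H; lia.
Qed.

(* The window [k <= y < k + 1] contains at most one integer, so at most one term is nonzero. *)
Lemma sumk_le_window F B y n : 0 <= B ->
  (forall k, (k < n)%nat -> 0 <= F k <= B) ->
  (forall k, (k < n)%nat -> (y < INR k \/ INR k + 1 <= y) -> F k = 0) ->
  sumk F n <= B.
Proof.
  intros HB Hbd Hsupp.
  enough (sumk F n <= B /\ (INR n <= y -> sumk F n = 0)) by tauto.
  induction n as [|n IH]; simpl sumk; [split; intros; lra|].
  destruct IH as [IHle IHzero]; [intros; apply Hbd; lia | intros; apply Hsupp; [lia | auto]|].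
  rewrite S_INR. specialize (Hbd n (Nat.lt_succ_diag_r n)).
  destruct (Rlt_le_dec y (INR n)) as [Hy|Hy].
  - rewrite (Hsupp n); [split; lra | lia | left; exact Hy].
  - rewrite IHzero by exact Hy. split; [lra|]. intros.
    rewrite (Hsupp n); [lra | lia | right; lra].
Qed.

Lemma pow2_pos n : 0 < 2 ^ n.
Proof. apply pow_lt. lra. Qed.

Lemma INR_pow2 n : INR (2 ^ n) = 2 ^ n.
Proof. rewrite pow_INR. reflexivity. Qed.

Lemma sqrt_pow2_eq n : sqrt (2 ^ n) = sqrt 2 ^ n.
Proof.
  induction n as [|n IH]; simpl; [apply sqrt_1|].
  rewrite sqrt_mult_alt, IH by lra. reflexivity.
Qed.

Lemma dyad_in01 n k : (k <= 2 ^ n)%nat -> 0 <= dyad n k <= 1.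
Proof.
  intros Hk. apply le_INR in Hk. rewrite INR_pow2 in Hk.
  pose proof (pow2_pos n). pose proof (pos_INR k). unfold dyad.
  split; [apply Rdiv_le_0_compat; lra|]. apply Rmult_le_reg_r with (2 ^ n); [lra|].
  field_simplify; lra.
Qed.

Lemma dyad_double m k : dyad (S m) (2 * k) = dyad m k.
Proof. unfold dyad. rewrite mult_INR. simpl. field. pose proof (pow2_pos m). lra. Qed.

Lemma dyad_mid m k : dyad (S m) (S (2 * k)) = (dyad m k + dyad m (S k)) / 2.
Proof. unfold dyad. rewrite !S_INR, mult_INR. simpl. field. pose proof (pow2_pos m). lra. Qed.

Lemma dyad_succ m k : dyad m (S k) = dyad m k + / 2 ^ m.
Proof. unfold dyad. rewrite S_INR. field. pose proof (pow2_pos m). lra. Qed.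

Lemma dyad_le_mid m k : dyad m k <= dyad (S m) (S (2 * k)).
Proof. rewrite dyad_mid, dyad_succ. pose proof (Rinv_0_lt_compat _ (pow2_pos m)). lra. Qed.

Lemma mid_le_dyad m k : dyad (S m) (S (2 * k)) <= dyad m (S k).
Proof. rewrite dyad_mid, dyad_succ. pose proof (Rinv_0_lt_compat _ (pow2_pos m)). lra. Qed.

Lemma e00_ge0 t : 0 <= e00 t.
Proof. apply Rmax_l. Qed.

Lemma e00_le_half t : e00 t <= / 2.
Proof. unfold e00, Rmax, Rmin. repeat destruct Rle_dec; lra. Qed.

Lemma e00_out t : t <= 0 \/ 1 <= t -> e00 t = 0.
Proof. unfold e00, Rmax, Rmin. intros. repeat destruct Rle_dec; lra. Qed.

Lemma e00_affine A h : 0 < h -> (0 <= A \/ A + h <= 0) -> (/ 2 <= A \/ A + h <= / 2) ->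
  (1 <= A \/ A + h <= 1) -> e00 (A + h / 2) = (e00 A + e00 (A + h)) / 2.
Proof. intros. unfold e00, Rmax, Rmin. repeat destruct Rle_dec; lra. Qed.

Lemma e00_int (z : Z) : e00 (IZR z) = 0.
Proof.
  apply e00_out. destruct (Z.le_gt_cases z 0) as [H|H];
    [apply IZR_le in H | assert (1 <= IZR z) by (apply IZR_le; lia)]; lra.
Qed.

Lemma e00_half_int (z : Z) : e00 (IZR z + / 2) = if Z.eq_dec z 0 then / 2 else 0.
Proof.
  destruct (Z.eq_dec z 0) as [->|Hz].
  - unfold e00, Rmax, Rmin. repeat destruct Rle_dec; lra.
  - apply e00_out. destruct (Z.le_gt_cases z (-1)) as [H|H];
      [apply IZR_le in H | assert (1 <= IZR z) by (apply IZR_le; lia)]; lra.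
Qed.

(* The breakpoints 0, 1/2, 1 of [e00] lie on the grid of step [1 / (2 r)], so [e00] is affine on each grid cell. *)
Lemma e00_grid_mid (z : Z) (r : nat) : (0 < r)%nat ->
  e00 ((IZR z + / 2) / (2 * INR r)) =
  (e00 (IZR z / (2 * INR r)) + e00 ((IZR z + 1) / (2 * INR r))) / 2.
Proof.
  intros Hr. assert (Hr' : 0 < INR r) by (apply lt_0_INR; exact Hr).
  rewrite INR_IZR_INZ in *. set (q := 2 * IZR (Z.of_nat r)).
  assert (grid : forall c : Z, (z + 1 <= c \/ c <= z)%Z -> IZR z / q + / q <= IZR c / q \/ IZR c / q <= IZR z / q).
  { intros c [Hc|Hc]; apply IZR_le in Hc; rewrite ?plus_IZR in Hc; [left|right];
      unfold q; apply Rmult_le_reg_r with q; unfold q; try lra; field_simplify; lra. }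
  replace ((IZR z + / 2) / q) with (IZR z / q + / q / 2) by (field; unfold q; lra).
  replace ((IZR z + 1) / q) with (IZR z / q + / q) by (field; unfold q; lra).
  apply e00_affine.
  - apply Rinv_0_lt_compat. unfold q. lra.
  - destruct (grid 0%Z ltac:(lia)) as [H|H]; [right|left]; unfold Rdiv in H; lra.
  - destruct (grid (Z.of_nat r) ltac:(lia)) as [H|H]; [right|left];
      replace (IZR (Z.of_nat r) / q) with (/ 2) in H by (unfold q; field; lra); lra.
  - destruct (grid (2 * Z.of_nat r)%Z ltac:(lia)) as [H|H]; [right|left];
      replace (IZR (2 * Z.of_nat r) / q) with 1 in H by (unfold q; rewrite mult_IZR; field; lra); lra.
Qed.

Lemma IZR_nat_sub (a b : nat) : IZR (Z.of_nat a - Z.of_nat b) = INR a - INR b.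
Proof. rewrite minus_IZR, <- !INR_IZR_INZ. reflexivity. Qed.

Lemma schauder_coarse n m i j : (m <= n)%nat -> schauder n j (dyad m i) = 0.
Proof.
  intros Hmn. unfold schauder.
  replace (2 ^ n * dyad m i - INR j) with (IZR (Z.of_nat (i * 2 ^ (n - m)) - Z.of_nat j)).
  - rewrite e00_int. ring.
  - rewrite IZR_nat_sub, mult_INR, INR_pow2. unfold dyad.
    replace n with (m + (n - m))%nat at 2 by lia. rewrite pow_add.
    field. pose proof (pow2_pos m). lra.
Qed.

Lemma schauder_mid n j k :
  schauder n j (dyad (S n) (S (2 * k))) = if Nat.eq_dec j k then / (2 * sqrt (2 ^ n)) else 0.
Proof.
  unfold schauder.
  replace (2 ^ n * dyad (S n) (S (2 * k)) - INR j) with (IZR (Z.of_nat k - Z.of_nat j) + / 2).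
  - rewrite e00_half_int. pose proof (sqrt_lt_R0 _ (pow2_pos n)).
    destruct (Z.eq_dec _ 0), (Nat.eq_dec j k); try lia; field; lra.
  - rewrite IZR_nat_sub, dyad_mid, dyad_succ. unfold dyad. field. pose proof (pow2_pos n). lra.
Qed.

Lemma schauder_fine_mid n m j k : (n < m)%nat ->
  schauder n j (dyad (S m) (S (2 * k))) =
  (schauder n j (dyad m k) + schauder n j (dyad m (S k))) / 2.
Proof.
  intros Hnm. unfold schauder.
  destruct (m - n)%nat as [|p] eqn:Ep; [lia|].
  set (z := (Z.of_nat k - Z.of_nat (j * 2 ^ S p))%Z).
  assert (Hz : forall a, 2 ^ n * ((INR k + a) / 2 ^ m) - INR j = (IZR z + a) / (2 * INR (2 ^ p))).
  { intros a. unfold z. rewrite IZR_nat_sub, mult_INR, !INR_pow2.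
    replace m with (n + S p)%nat by lia. rewrite pow_add. simpl.
    field. split; apply pow_nonzero; lra. }
  rewrite dyad_mid, dyad_succ. unfold dyad.
  replace ((INR k / 2 ^ m + (INR k / 2 ^ m + / 2 ^ m)) / 2) with ((INR k + / 2) / 2 ^ m)
    by (field; apply pow_nonzero; lra).
  replace (INR k / 2 ^ m + / 2 ^ m) with ((INR k + 1) / 2 ^ m) by (field; apply pow_nonzero; lra).
  rewrite Hz, Hz. replace (INR k / 2 ^ m) with ((INR k + 0) / 2 ^ m) by (f_equal; ring).
  rewrite Hz, Rplus_0_r, e00_grid_mid by (apply Nat.neq_0_lt_0, Nat.pow_nonzero; lia).
  field. apply Rgt_not_eq, sqrt_lt_R0, pow2_pos.
Qed.

Definition level_sum (f : nat -> R -> R) n t :=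
  sumk (fun k => theta f n k * schauder n k t) (2 ^ n).

Lemma level_sum_mid f n m k : (k < 2 ^ m)%nat ->
  level_sum f n (dyad (S m) (S (2 * k))) - (level_sum f n (dyad m k) + level_sum f n (dyad m (S k))) / 2 =
  if Nat.eq_dec n m then theta f m k / (2 * sqrt (2 ^ m)) else 0.
Proof.
  intros Hk. unfold level_sum.
  rewrite <- sumk_add. unfold Rdiv at 1. rewrite (Rmult_comm _ (/ 2)), <- sumk_scal, <- sumk_sub.
  destruct (Nat.eq_dec n m) as [->|Hnm].
  - rewrite (sumk_single _ _ k Hk).
    + rewrite schauder_mid, !schauder_coarse by lia. destruct Nat.eq_dec; [|lia]. unfold Rdiv. ring.
    + intros j _ Hjk. rewrite schauder_mid, !schauder_coarse by lia.
      destruct Nat.eq_dec; [lia|]. ring.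
  - rewrite <- (sumk0 (2 ^ n)). apply sumk_ext. intros j _.
    destruct (le_lt_dec m n) as [Hmn|Hnm'].
    + rewrite <- (dyad_double m k), <- (dyad_double m (S k)), !schauder_coarse by lia. ring.
    + rewrite schauder_fine_mid by exact Hnm'. field.
Qed.

Lemma is_series_single m (c : R) : is_series (fun n => if Nat.eq_dec n m then c else 0) c.
Proof.
  set (a := fun n => if Nat.eq_dec n m then c else 0).
  assert (Hsum : forall n, sum_n a n = if le_dec m n then c else 0).
  { induction n as [|n IH].
    - rewrite sum_O. unfold a. destruct (Nat.eq_dec 0 m), (le_dec m 0); auto; lia.
    - rewrite sum_Sn, IH. unfold a. change plus with Rplus.
      destruct (Nat.eq_dec (S n) m), (le_dec m n), (le_dec m (S n)); try lia; lra. }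
  apply (filterlim_ext_loc (fun _ => c)); [|apply filterlim_const].
  exists m. intros n Hn. rewrite Hsum. destruct le_dec; [reflexivity | lia].
Qed.

Definition incr (x : R -> R) m k := x (dyad m (S k)) - x (dyad m k).

Definition mid_defect (x : R -> R) m k :=
  x (dyad (S m) (S (2 * k))) - (x (dyad m k) + x (dyad m (S k))) / 2.

Lemma incr_left x m k : incr x (S m) (2 * k) = incr x m k / 2 + mid_defect x m k.
Proof. unfold incr, mid_defect. rewrite dyad_double. lra. Qed.

Lemma incr_right x m k : incr x (S m) (S (2 * k)) = incr x m k / 2 - mid_defect x m k.
Proof.
  unfold incr, mid_defect. replace (S (S (2 * k))) with (2 * S k)%nat by lia.
  rewrite dyad_double. lra.
Qed.

(* Uses [sqrt 2 <= 3 / 2], so that [sqrt 2 * (C + M) <= 2 * C] as soon as [3 * M <= C]. *)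
Lemma half_shift_bound C M s d c : 0 < s -> 3 * M <= C ->
  Rabs d <= C / s -> Rabs c <= M / (2 * s) -> Rabs (d / 2 + c) <= C / (sqrt 2 * s).
Proof.
  intros Hs HC Hd Hc.
  pose proof (sqrt_lt_R0 2 ltac:(lra)). pose proof (sqrt_sqrt 2 ltac:(lra)).
  assert (Hsqrt : sqrt 2 <= 3 / 2) by nra.
  assert (HM : 0 <= M).
  { assert (0 <= M / (2 * s)) by (pose proof (Rabs_pos c); lra).
    replace M with (M / (2 * s) * (2 * s)) by (field; lra). nra. }
  assert (Hkey : sqrt 2 * (C + M) <= 2 * C) by nra.
  eapply Rle_trans; [apply Rabs_triang|].
  rewrite Rabs_div, (Rabs_pos_eq 2) by lra.
  apply Rle_trans with (sqrt 2 * (C + M) / (2 * sqrt 2 * s)).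
  - apply Rle_trans with (C / s / 2 + M / (2 * s)); [lra | right; field; lra].
  - replace (C / (sqrt 2 * s)) with (2 * C / (2 * sqrt 2 * s)) by (field; lra).
    unfold Rdiv. apply Rmult_le_compat_r; [left; apply Rinv_0_lt_compat; nra | exact Hkey].
Qed.

Lemma incr_bound_of_mid_defect x M : 0 <= M ->
  (forall m k, (k < 2 ^ m)%nat -> Rabs (mid_defect x m k) <= M / (2 * sqrt (2 ^ m))) ->
  exists C, 0 <= C /\ forall m k, (k < 2 ^ m)%nat -> Rabs (incr x m k) <= C / sqrt (2 ^ m).
Proof.
  intros HM Hdef. set (C := 3 * M + Rabs (incr x 0 0)).
  pose proof (Rabs_pos (incr x 0 0)).
  exists C. split; [unfold C; lra|].
  induction m as [|m IH]; intros k Hk.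
  - simpl in Hk. replace k with 0%nat by lia. simpl. rewrite sqrt_1. unfold C. lra.
  - pose proof (sqrt_lt_R0 _ (pow2_pos m)).
    replace (sqrt (2 ^ S m)) with (sqrt 2 * sqrt (2 ^ m)) by (simpl; rewrite sqrt_mult_alt; lra).
    simpl in Hk. destruct (Nat.Even_or_Odd k) as [[j ->]|[j ->]].
    + rewrite incr_left. apply (half_shift_bound C M); [lra | unfold C; lra | apply IH | apply Hdef]; lia.
    + replace (2 * j + 1)%nat with (S (2 * j)) by lia. rewrite incr_right.
      unfold Rminus. apply (half_shift_bound C M); [lra | unfold C; lra | apply IH | rewrite Rabs_Ropp; apply Hdef]; lia.
Qed.

Section Expansion.

Variables (f : nat -> R -> R) (M : R).
Hypothesis f_bounded : forall n t, 0 <= t <= 1 -> Rabs (f n t) <= M.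

Lemma bound_ge0 : 0 <= M.
Proof. pose proof (f_bounded 0 0 ltac:(lra)). pose proof (Rabs_pos (f 0%nat 0)). lra. Qed.

Lemma theta_bounded n k : (k < 2 ^ n)%nat -> Rabs (theta f n k) <= M.
Proof. intros Hk. apply f_bounded, dyad_in01. lia. Qed.

Lemma level_sum_bounded n t : Rabs (level_sum f n t) <= M / (2 * sqrt (2 ^ n)).
Proof.
  pose proof bound_ge0 as HM.
  pose proof (sqrt_lt_R0 _ (pow2_pos n)) as Hs.
  unfold level_sum. eapply Rle_trans.
  { apply (sumk_abs_le _ (fun k => M / sqrt (2 ^ n) * e00 (2 ^ n * t - INR k))).
    intros k Hk. unfold schauder. rewrite !Rabs_mult, (Rabs_pos_eq (e00 _)) by apply e00_ge0.
    rewrite Rabs_inv, (Rabs_pos_eq (sqrt _)) by lra. unfold Rdiv. rewrite <- Rmult_assoc.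
    apply Rmult_le_compat_r; [apply e00_ge0|]. apply Rmult_le_compat_r; [left; apply Rinv_0_lt_compat; lra|].
    apply theta_bounded. exact Hk. }
  rewrite sumk_scal. replace (M / (2 * sqrt (2 ^ n))) with (M / sqrt (2 ^ n) * / 2) by (field; lra).
  apply Rmult_le_compat_l; [apply Rdiv_le_0_compat; lra|].
  apply (sumk_le_window _ _ (2 ^ n * t)); [lra | |].
  - intros. split; [apply e00_ge0 | apply e00_le_half].
  - intros k _ Hk. apply e00_out. lra.
Qed.

Lemma ex_series_level_sum t : ex_series (fun n => level_sum f n t).
Proof.
  pose proof bound_ge0 as HM.
  pose proof (sqrt_lt_R0 2 ltac:(lra)) as Hs. pose proof (sqrt_sqrt 2 ltac:(lra)) as Hs2.
  apply (@ex_series_le R_AbsRing R_CompleteNormedModule _ (fun n => M / 2 * (/ sqrt 2) ^ n)).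
  - intros n. eapply Rle_trans; [apply level_sum_bounded|].
    rewrite sqrt_pow2_eq, pow_inv. right. field. apply pow_nonzero. lra.
  - apply (@ex_series_scal_l R_AbsRing R_NormedModule), ex_series_geom.
    rewrite Rabs_pos_eq by (left; apply Rinv_0_lt_compat; lra).
    rewrite <- Rinv_1. apply Rinv_lt_contravar; nra.
Qed.

Lemma mid_defect_xf m k : (k < 2 ^ m)%nat ->
  mid_defect (xf f) m k = theta f m k / (2 * sqrt (2 ^ m)).
Proof.
  intros Hk. unfold mid_defect, xf. fold (level_sum f).
  rewrite <- (is_series_unique _ _ (is_series_single m (theta f m k / (2 * sqrt (2 ^ m))))).
  symmetry. apply is_series_unique.
  eapply is_series_ext; [intros n; apply level_sum_mid, Hk|].
  apply (is_series_minus (V := R_NormedModule)); [apply Series_correct, ex_series_level_sum|].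
  apply is_series_scal_r, (is_series_plus (V := R_NormedModule));
    apply Series_correct, ex_series_level_sum.
Qed.

Lemma xf_incr_bound : exists C, 0 <= C /\
  forall m k, (k < 2 ^ m)%nat -> Rabs (incr (xf f) m k) <= C / sqrt (2 ^ m).
Proof.
  pose proof bound_ge0 as HM.
  apply (incr_bound_of_mid_defect _ M HM). intros m k Hk.
  pose proof (sqrt_lt_R0 _ (pow2_pos m)) as Hs.
  rewrite mid_defect_xf by exact Hk. unfold Rdiv.
  rewrite Rabs_mult, Rabs_inv, (Rabs_pos_eq (2 * _)) by lra.
  apply Rmult_le_compat_r; [left; apply Rinv_0_lt_compat; lra | apply theta_bounded; exact Hk].
Qed.

End Expansion.

(* The contribution of the level-[m] interval cut by [t]: its left half is counted at level [S m], its right half is not. *)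
Definition cut_error (x y : R -> R) m t :=
  sumk (fun k => if Rle_dec (dyad m k) t then
                   if Rle_dec (dyad (S m) (S (2 * k))) t then 0
                   else - (incr x (S m) (S (2 * k)) * incr y (S m) (S (2 * k)))
                 else 0) (2 ^ m).

Lemma covar_n_succ x y m t :
  covar_n x y (S m) t =
  (covar_n x y m t +
   sumk (fun k => if Rle_dec (dyad m k) t then 4 * mid_defect x m k * mid_defect y m k else 0) (2 ^ m)) / 2
  + cut_error x y m t.
Proof.
  unfold covar_n, cut_error. change (2 ^ S m)%nat with (2 * 2 ^ m)%nat.
  rewrite sumk_pairs, <- sumk_add. unfold Rdiv. rewrite Rmult_comm, <- sumk_scal, <- sumk_add.
  apply sumk_ext. intros k _. cbv beta.
  fold (incr x (S m) (2 * k)) (incr y (S m) (2 * k)) (incr x m k) (incr y m k)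
       (incr x (S m) (S (2 * k))) (incr y (S m) (S (2 * k))).
  rewrite dyad_double.
  destruct (Rle_dec (dyad m k) t) as [Hk|Hk].
  - rewrite !incr_left. destruct Rle_dec; rewrite ?incr_right; field.
  - pose proof (dyad_le_mid m k). destruct Rle_dec; [lra | ring].
Qed.

Lemma cut_error_bound x y m t a b :
  (forall j, (j < 2 ^ S m)%nat -> Rabs (incr x (S m) j) <= a) ->
  (forall j, (j < 2 ^ S m)%nat -> Rabs (incr y (S m) j) <= b) ->
  Rabs (cut_error x y m t) <= a * b.
Proof.
  intros Hx Hy. unfold cut_error.
  assert (H0 : (0 < 2 ^ S m)%nat) by (apply Nat.neq_0_lt_0, Nat.pow_nonzero; lia).
  assert (Hab : 0 <= a * b)
    by (apply Rmult_le_pos; eapply Rle_trans; [apply Rabs_pos | apply Hx, H0 | apply Rabs_pos | apply Hy, H0]).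
  eapply Rle_trans; [apply sumk_abs_triang|].
  pose proof (pow2_pos m) as Hp.
  apply (sumk_le_window _ _ (t * 2 ^ m)); [exact Hab | |].
  - intros k Hk. split; [apply Rabs_pos|].
    destruct Rle_dec; [destruct Rle_dec|]; rewrite ?Rabs_R0; [exact Hab | | exact Hab].
    rewrite Rabs_Ropp, Rabs_mult.
    assert (Hj : (S (2 * k) < 2 ^ S m)%nat) by (simpl; lia).
    apply Rmult_le_compat; try apply Rabs_pos; [apply Hx | apply Hy]; exact Hj.
  - intros k _ Hwin. destruct Rle_dec as [H1|H1]; [|apply Rabs_R0].
    destruct Rle_dec as [H2|H2]; [apply Rabs_R0|]. exfalso.
    pose proof (mid_le_dyad m k) as Hmid.
    assert (Hl : INR k <= t * 2 ^ m).
    { replace (INR k) with (dyad m k * 2 ^ m) by (unfold dyad; field; lra).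
      apply Rmult_le_compat_r; lra. }
    assert (Hr : t * 2 ^ m < INR k + 1).
    { replace (INR k + 1) with (dyad m (S k) * 2 ^ m) by (unfold dyad; rewrite S_INR; field; lra).
      apply Rmult_lt_compat_r; lra. }
    lra.
Qed.

Lemma is_lim_seq_geom_bound (u : nat -> R) K :
  (forall m, Rabs (u m) <= K * (/ 2) ^ m) -> is_lim_seq u 0.
Proof.
  intros Hu.
  assert (Hg : is_lim_seq (fun m => K * (/ 2) ^ m) 0).
  { replace (Finite 0) with (Rbar_mult K 0) by (simpl; f_equal; ring).
    apply is_lim_seq_scal_l, is_lim_seq_geom. rewrite Rabs_pos_eq; lra. }
  apply (is_lim_seq_le_le (fun m => - (K * (/ 2) ^ m)) _ (fun m => K * (/ 2) ^ m)).
  - intros m. specialize (Hu m). apply Rabs_le_between in Hu. lra.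
  - replace 0 with (- 0) by ring. apply (is_lim_seq_opp _ (Finite 0)), Hg.
  - exact Hg.
Qed.

Lemma is_lim_seq_contract (u e : nat -> R) :
  (forall m, Rabs (u (S m)) <= Rabs (u m) / 2 + e m) -> is_lim_seq e 0 -> is_lim_seq u 0.
Proof.
  intros Hu He. apply is_lim_seq_Reals in He. apply is_lim_seq_Reals.
  intros eps Heps.
  destruct (He (eps / 4) ltac:(lra)) as [N HN].
  set (D := Rabs (u N)).
  assert (Hj : forall j, Rabs (u (N + j)%nat) <= D * (/ 2) ^ j + eps / 2).
  { induction j as [|j IH]; [rewrite Nat.add_0_r; simpl; unfold D; lra|].
    specialize (HN (N + j)%nat ltac:(lia)). unfold R_dist in HN. rewrite Rminus_0_r in HN.
    replace (N + S j)%nat with (S (N + j)) by lia. simpl pow.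
    eapply Rle_trans; [apply Hu|]. pose proof (Rle_abs (e (N + j)%nat)). lra. }
  destruct (pow_lt_1_zero (/ 2) ltac:(rewrite Rabs_pos_eq; lra) (eps / (2 * (D + 1))))
    as [J HJ]; [apply Rdiv_lt_0_compat; unfold D; pose proof (Rabs_pos (u N)); lra|].
  exists (N + J)%nat. intros n Hn. unfold R_dist. rewrite Rminus_0_r.
  replace n with (N + (n - N))%nat by lia.
  specialize (HJ (n - N)%nat ltac:(lia)). rewrite Rabs_pos_eq in HJ by (apply pow_le; lra).
  assert (HD : 0 <= D) by apply Rabs_pos.
  assert (D * (/ 2) ^ (n - N) < eps / 2).
  { apply Rle_lt_trans with ((D + 1) * (/ 2) ^ (n - N)); [apply Rmult_le_compat_r; [apply pow_le|]; lra|].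
    replace (eps / 2) with ((D + 1) * (eps / (2 * (D + 1)))) by (field; lra).
    apply Rmult_lt_compat_l; lra. }
  specialize (Hj (n - N)%nat). lra.
Qed.

Lemma is_lim_seq_avg_rec (a b c : nat -> R) (L : R) :
  (forall m, a (S m) = (a m + b m) / 2 + c m) ->
  is_lim_seq b L -> is_lim_seq c 0 -> is_lim_seq a L.
Proof.
  intros Hrec Hb Hc.
  assert (Hu : is_lim_seq (fun m => a m - L) 0).
  { apply (is_lim_seq_contract _ (fun m => Rabs (b m - L) + Rabs (c m))).
    - intros m. rewrite Hrec.
      replace ((a m + b m) / 2 + c m - L) with ((a m - L) / 2 + ((b m - L) / 2 + c m)) by field.
      eapply Rle_trans; [apply Rabs_triang|]. rewrite Rabs_div, (Rabs_pos_eq 2) by lra.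
      apply Rplus_le_compat_l. eapply Rle_trans; [apply Rabs_triang|].
      rewrite Rabs_div, (Rabs_pos_eq 2) by lra. pose proof (Rabs_pos (b m - L)). lra.
    - replace (Finite 0) with (Rbar_plus 0 0) by (simpl; f_equal; ring).
      apply is_lim_seq_plus'; [|apply (proj1 (is_lim_seq_abs_0 c)), Hc].
      apply (proj1 (is_lim_seq_abs_0 (fun m => b m - L))).
      replace (Finite 0) with (Rbar_minus L L) by (simpl; f_equal; ring).
      apply is_lim_seq_minus'; [exact Hb | apply is_lim_seq_const]. }
  apply (is_lim_seq_ext (fun m => (a m - L) + L)); [intros; ring|].
  replace (Finite L) with (Rbar_plus 0 L) by (simpl; f_equal; ring).
  apply is_lim_seq_plus'; [exact Hu | apply is_lim_seq_const].
Qed.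

Lemma Riemann_sum_map_iota (h : R -> R) (g : nat -> R) n s :
  Riemann_sum h (SF_seq_f2 (fun x _ => x) (seq.map g (seq.iota s (S n)))) =
  sumk (fun i => (g (S (s + i)) - g (s + i)%nat) * h (g (s + i)%nat)) n.
Proof.
  revert s. induction n as [|n IH]; intros s; [reflexivity|].
  change (seq.map g (seq.iota s (S (S n)))) with (cons (g s) (seq.map g (seq.iota (S s) (S n)))).
  rewrite SF_cons_f2 by (simpl; lia). rewrite Riemann_sum_cons, IH, sumk_shift.
  rewrite Nat.add_0_r. change (plus ?a ?b) with (a + b). change (scal ?a ?b) with (a * b).
  f_equal. apply sumk_ext. intros k _. replace (s + S k)%nat with (S s + k)%nat by lia. reflexivity.
Qed.

Lemma INR_pow2_pred m : INR (2 ^ m - 1) + 1 = 2 ^ m.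
Proof.
  rewrite <- S_INR, <- INR_pow2. f_equal. pose proof (Nat.pow_nonzero 2 m). lia.
Qed.

Lemma Riemann_sum_dyadic (h : R -> R) m :
  Riemann_sum h (SF_seq_f2 (fun x _ => x) (unif_part 0 1 (2 ^ m - 1)%nat)) =
  sumk (fun k => h (dyad m k) / 2 ^ m) (2 ^ m).
Proof.
  assert (E : (S (2 ^ m - 1) = 2 ^ m)%nat) by (pose proof (Nat.pow_nonzero 2 m); lia).
  unfold unif_part, seq.mkseq. rewrite Riemann_sum_map_iota, E.
  apply sumk_ext. intros k _. rewrite INR_pow2_pred, S_INR. rewrite Nat.add_0_l. unfold dyad.
  replace (0 + INR k * (1 - 0) / 2 ^ m) with (INR k / 2 ^ m) by (field; apply pow_nonzero; lra).
  field. apply pow_nonzero. lra.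
Qed.

Lemma is_lim_seq_dyadic_Riemann_sum (h : R -> R) (I : R) : is_RInt h 0 1 I ->
  is_lim_seq (fun m => sumk (fun k => h (dyad m k) / 2 ^ m) (2 ^ m)) I.
Proof.
  intros HI. apply is_lim_seq_Reals. intros eps Heps.
  destruct (HI _ (locally_ball I (mkposreal eps Heps))) as [delta Hdelta].
  destruct (pow_lt_1_zero (/ 2) ltac:(rewrite Rabs_pos_eq; lra) delta (cond_pos delta)) as [N HN].
  exists N. intros m Hm.
  destruct (Riemann_fine_unif_part (fun x _ => x) 0 1 (2 ^ m - 1)%nat) as [Hstep [Hptd [H0 H1]]];
    [intros; lra | lra |].
  rewrite INR_pow2_pred, Rminus_0_r, Rdiv_1_l, <- pow_inv in Hstep.
  specialize (HN m Hm). rewrite Rabs_pos_eq in HN by (apply pow_le; lra).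
  specialize (Hdelta _ (Rle_lt_trans _ _ _ Hstep HN)).
  rewrite Rmin_left, Rmax_right in Hdelta by lra.
  specialize (Hdelta (conj Hptd (conj H0 H1))).
  rewrite Rminus_0_r, sign_eq_1, (scal_one (V := R_ModuleSpace)) in Hdelta by lra.
  rewrite <- Riemann_sum_dyadic. exact Hdelta.
Qed.

Lemma ex_RInt_sub01 (h : R -> R) a b : 0 <= a <= b -> b <= 1 -> ex_RInt h 0 1 -> ex_RInt h a b.
Proof.
  intros Hab Hb H. apply (ex_RInt_Chasles_1 h a b 1); [lra|].
  apply (ex_RInt_Chasles_2 h 0 a 1); [lra | exact H].
Qed.

Lemma is_RInt_cut (h : R -> R) t : 0 <= t <= 1 -> ex_RInt h 0 1 ->
  is_RInt (fun s => if Rle_dec s t then h s else 0) 0 1 (RInt h 0 t).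
Proof.
  intros Ht Hh.
  assert (Hleft : is_RInt (fun s => if Rle_dec s t then h s else 0) 0 t (RInt h 0 t)).
  { apply (is_RInt_ext h).
    - intros s Hs. rewrite Rmin_left, Rmax_right in Hs by lra. destruct Rle_dec; [reflexivity | lra].
    - apply (RInt_correct (V := R_CompleteNormedModule)), ex_RInt_sub01; [lra | lra | exact Hh]. }
  assert (Hright : is_RInt (fun s => if Rle_dec s t then h s else 0) t 1 (scal (1 - t) 0)).
  { apply (is_RInt_ext (fun _ => 0)); [|apply (is_RInt_const (V := R_NormedModule))].
    intros s Hs. rewrite Rmin_left, Rmax_right in Hs by lra. destruct Rle_dec; [lra | reflexivity]. }
  refine (eq_ind _ (fun v => is_RInt _ 0 1 v) (is_RInt_Chasles _ _ _ _ _ _ Hleft Hright) _ _).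
  change (RInt h 0 t + (1 - t) * 0 = RInt h 0 t). ring.
Qed.

Lemma pos_Rl_map (g : R -> R) l i : (i < length l)%nat ->
  RList.pos_Rl (List.map g l) i = g (RList.pos_Rl l i).
Proof. revert i. induction l; intros [|i] Hi; simpl in *; try lia; auto. apply IHl. lia. Qed.

Lemma IsStepFun_comp a b (phi : StepFun a b) (g : R -> R) : IsStepFun (fun x => g (phi x)) a b.
Proof.
  destruct phi as [phi [l [lf [H1 [H2 [H3 [H4 H5]]]]]]]. simpl.
  exists l, (List.map g lf). repeat split; auto.
  - rewrite List.length_map. exact H4.
  - intros i Hi x Hx. rewrite pos_Rl_map, (H5 i Hi x Hx) by lia. reflexivity.
Qed.

(* Squaring is [2 B]-Lipschitz on [[-B, B]]; clipping the approximating step function to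
   [[-B, B]] keeps it a step function and only improves the approximation. *)
Lemma Riemann_integrable_sqr f a b B :
  (forall x, Rmin a b <= x <= Rmax a b -> Rabs (f x) <= B) ->
  Riemann_integrable f a b -> Riemann_integrable (fun x => f x * f x) a b.
Proof.
  intros HfB Hf eps.
  assert (HB : 0 <= B) by (pose proof (HfB (Rmin a b) (conj (Rle_refl _) (Rmin_Rmax a b)));
                          pose proof (Rabs_pos (f (Rmin a b))); lra).
  assert (Hpos : 0 < eps / (1 + 2 * B)) by (apply Rdiv_lt_0_compat; [apply cond_pos | lra]).
  destruct (Hf (mkposreal _ Hpos)) as [phi [psi [Happrox Hsmall]]].
  set (clip := fun y => Rmax (- B) (Rmin B y)).
  exists (mkStepFun (IsStepFun_comp a b phi (fun y => clip y * clip y))).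
  exists (mkStepFun (StepFun_P28 (2 * B) psi psi)).
  split.
  - intros x Hx. simpl. specialize (Happrox x Hx). specialize (HfB x Hx).
    assert (Hclip : Rabs (f x - clip (phi x)) <= Rabs (f x - phi x)).
    { unfold clip, Rmax, Rmin. unfold Rabs in *. repeat destruct Rcase_abs; repeat destruct Rle_dec; lra. }
    assert (Hsum : Rabs (f x + clip (phi x)) <= 2 * B).
    { unfold clip, Rmax, Rmin. unfold Rabs in *. repeat destruct Rcase_abs; repeat destruct Rle_dec; lra. }
    replace (f x * f x - clip (phi x) * clip (phi x))
      with ((f x - clip (phi x)) * (f x + clip (phi x))) by ring.
    rewrite Rabs_mult. pose proof (Rabs_pos (f x - phi x)).
    apply Rle_trans with (psi x * (2 * B)); [apply Rmult_le_compat; auto using Rabs_pos; lra | nra].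
  - rewrite StepFun_P30. simpl in Hsmall.
    replace (RiemannInt_SF psi + 2 * B * RiemannInt_SF psi) with ((1 + 2 * B) * RiemannInt_SF psi) by ring.
    rewrite Rabs_mult, (Rabs_pos_eq (1 + 2 * B)) by lra.
    apply Rmult_lt_compat_l with (r := 1 + 2 * B) in Hsmall; [|lra].
    replace ((1 + 2 * B) * (eps / (1 + 2 * B))) with (pos eps) in Hsmall by (field; lra).
    exact Hsmall.
Qed.

(* Polarization: [f g = ((f + g)^2 - (f - g)^2) / 4]. *)
Lemma ex_RInt_mult f g a b : ex_RInt f a b -> ex_RInt g a b -> ex_RInt (fun x => f x * g x) a b.
Proof.
  intros Hf Hg.
  destruct (ex_RInt_ub _ _ _ Hf) as [Mf HMf]. destruct (ex_RInt_ub _ _ _ Hg) as [Mg HMg].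
  apply ex_RInt_Reals_0 in Hf. apply ex_RInt_Reals_0 in Hg. apply ex_RInt_Reals_1.
  apply Riemann_integrable_ext with
    (f := fun x => / 4 * ((f x + g x) * (f x + g x) - (f x - g x) * (f x - g x))); [intros; field|].
  apply Riemann_integrable_scal, Riemann_integrable_minus;
    apply (Riemann_integrable_sqr _ _ _ (Mf + Mg)).
  - intros x Hx. specialize (HMf x Hx). specialize (HMg x Hx).
    eapply Rle_trans; [apply Rabs_triang | exact (Rplus_le_compat _ _ _ _ HMf HMg)].
  - apply Riemann_integrable_plus; assumption.
  - intros x Hx. specialize (HMf x Hx). specialize (HMg x Hx).
    eapply Rle_trans; [apply Rabs_triang|]. rewrite Rabs_Ropp. exact (Rplus_le_compat _ _ _ _ HMf HMg).
  - apply Riemann_integrable_minus; assumption.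
Qed.

(* Continuity within [[0, 1]] holds because the indefinite integral of a function bounded by [B] is [B]-Lipschitz. *)
Lemma cont01_RInt (h : R -> R) B : ex_RInt h 0 1 -> (forall s, 0 <= s <= 1 -> Rabs (h s) <= B) ->
  cont01 (fun t => RInt h 0 t).
Proof.
  intros Hh HB t Ht.
  assert (HB0 : 0 <= B) by (pose proof (HB 0 ltac:(lra)); pose proof (Rabs_pos (h 0)); lra).
  assert (Hlip : forall u v, 0 <= u <= v -> v <= 1 -> Rabs (RInt h 0 v - RInt h 0 u) <= (v - u) * B).
  { intros u v Huv Hv.
    replace (RInt h 0 v - RInt h 0 u) with (RInt h u v).
    - apply abs_RInt_le_const; [lra | apply ex_RInt_sub01; auto; lra |].
      intros s Hs. apply HB. lra.
    - rewrite <- (RInt_Chasles (V := R_CompleteNormedModule) h 0 u v) by (apply ex_RInt_sub01; auto; lra).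
      change (plus ?a ?b) with (a + b). unfold Rminus. rewrite Rplus_comm, <- Rplus_assoc, Rplus_opp_l.
      symmetry. apply Rplus_0_l. }
  apply filterlim_locally. intros eps.
  assert (Hd : 0 < eps / (B + 1)) by (apply Rdiv_lt_0_compat; [apply cond_pos | lra]).
  exists (mkposreal _ Hd). intros y Hy Dy.
  change (Rabs (y - t) < eps / (B + 1)) in Hy. change (Rabs (RInt h 0 y - RInt h 0 t) < eps).
  assert (Hyt : Rabs (y - t) * B < eps).
  { apply Rle_lt_trans with (Rabs (y - t) * (B + 1)); [apply Rmult_le_compat_l; [apply Rabs_pos | lra]|].
    apply Rmult_lt_reg_r with (/ (B + 1)); [apply Rinv_0_lt_compat; lra|].
    replace (Rabs (y - t) * (B + 1) * / (B + 1)) with (Rabs (y - t)) by (field; lra). exact Hy. }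
  destruct (Rle_lt_dec t y).
  - pose proof (Hlip t y ltac:(lra) ltac:(lra)). rewrite Rabs_pos_eq in Hyt by lra. lra.
  - pose proof (Hlip y t ltac:(lra) ltac:(lra)). rewrite Rabs_minus_sym. rewrite Rabs_left in Hyt by lra. lra.
Qed.

Lemma bounded_upto (f : nat -> R -> R) :
  (forall n, exists M, forall t, 0 <= t <= 1 -> Rabs (f n t) <= M) ->
  forall N, exists M, forall n t, (n < N)%nat -> 0 <= t <= 1 -> Rabs (f n t) <= M.
Proof.
  intros Hb N. induction N as [|N [M1 H1]]; [exists 0; intros; lia|].
  destruct (Hb N) as [M2 H2]. exists (Rmax M1 M2). intros n t Hn Ht.
  destruct (Nat.eq_dec n N) as [->|HnN].
  - eapply Rle_trans; [apply H2, Ht | apply Rmax_r].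
  - eapply Rle_trans; [apply H1; [lia | exact Ht] | apply Rmax_l].
Qed.

Lemma inF_bounded f finf : inF f finf -> exists M, 0 <= M /\
  (forall n t, 0 <= t <= 1 -> Rabs (f n t) <= M) /\ (forall t, 0 <= t <= 1 -> Rabs (finf t) <= M).
Proof.
  intros [Hb [Hu _]]. destruct (Hu 1 ltac:(lra)) as [N HN].
  destruct (Hb N) as [MN HMN]. destruct (bounded_upto f Hb N) as [M1 HM1].
  assert (Hlim : forall t, 0 <= t <= 1 -> Rabs (finf t) <= MN + 1).
  { intros t Ht. specialize (HN N t (le_n _) Ht). specialize (HMN t Ht).
    replace (finf t) with (f N t - (f N t - finf t)) by ring.
    eapply Rle_trans; [apply Rabs_triang|]. rewrite Rabs_Ropp. lra. }
  exists (Rmax 0 (Rmax M1 (MN + 2))). split; [apply Rmax_l|]. split.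
  - intros n t Ht. eapply Rle_trans; [|apply Rmax_r]. destruct (le_lt_dec N n) as [HNn|HnN].
    + eapply Rle_trans; [|apply Rmax_r].
      replace (f n t) with ((f n t - finf t) + finf t) by ring.
      eapply Rle_trans; [apply Rabs_triang|]. specialize (HN n t HNn Ht). specialize (Hlim t Ht). lra.
    + eapply Rle_trans; [apply HM1; eauto | apply Rmax_l].
  - intros t Ht. eapply Rle_trans; [apply Hlim, Ht|].
    eapply Rle_trans; [|apply Rmax_r]. eapply Rle_trans; [|apply Rmax_r]. lra.
Qed.

Lemma inF_mult_unif f g finf ginf : inF f finf -> inF g ginf ->
  forall eps, 0 < eps -> exists N, forall n t, (N <= n)%nat -> 0 <= t <= 1 ->
    Rabs (f n t * g n t - finf t * ginf t) < eps.
Proof.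
  intros Hf Hg eps Heps.
  destruct (inF_bounded f finf Hf) as [Mf [HMf0 [HMf _]]].
  destruct (inF_bounded g ginf Hg) as [Mg [HMg0 [_ HMg]]].
  set (d := eps / (2 * (Mf + Mg + 1))).
  assert (Hd : 0 < d) by (apply Rdiv_lt_0_compat; lra).
  destruct (proj1 (proj2 Hf) d Hd) as [N1 HN1]. destruct (proj1 (proj2 Hg) d Hd) as [N2 HN2].
  exists (N1 + N2)%nat. intros n t Hn Ht.
  specialize (HN1 n t ltac:(lia) Ht). specialize (HN2 n t ltac:(lia) Ht).
  specialize (HMf n t Ht). specialize (HMg t Ht).
  replace (f n t * g n t - finf t * ginf t)
    with (f n t * (g n t - ginf t) + ginf t * (f n t - finf t)) by ring.
  eapply Rle_lt_trans; [apply Rabs_triang|]. rewrite !Rabs_mult.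
  apply Rle_lt_trans with (Mf * d + Mg * d).
  - apply Rplus_le_compat; apply Rmult_le_compat; auto using Rabs_pos; lra.
  - replace (Mf * d + Mg * d) with ((Mf + Mg) / (Mf + Mg + 1) * (eps / 2)) by (unfold d; field; lra).
    assert ((Mf + Mg) / (Mf + Mg + 1) < 1) by (apply Rmult_lt_reg_r with (Mf + Mg + 1); [lra|]; field_simplify; lra).
    nra.
Qed.

Definition riemann_prod (f g : nat -> R -> R) m t :=
  sumk (fun k => if Rle_dec (dyad m k) t then theta f m k * theta g m k / 2 ^ m else 0) (2 ^ m).

Lemma is_lim_seq_riemann_prod f g finf ginf t : inF f finf -> inF g ginf -> 0 <= t <= 1 ->
  is_lim_seq (fun m => riemann_prod f g m t) (RInt (fun s => finf s * ginf s) 0 t).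
Proof.
  intros Hf Hg Ht.
  set (h := fun s => if Rle_dec s t then finf s * ginf s else 0).
  set (P := fun m => sumk (fun k => h (dyad m k) / 2 ^ m) (2 ^ m)).
  assert (HP : is_lim_seq P (RInt (fun s => finf s * ginf s) 0 t)).
  { apply is_lim_seq_dyadic_Riemann_sum, is_RInt_cut; [exact Ht|].
    apply ex_RInt_mult; [apply Hf | apply Hg]. }
  assert (Hdiff : is_lim_seq (fun m => riemann_prod f g m t - P m) 0).
  { apply is_lim_seq_Reals. intros eps Heps.
    destruct (inF_mult_unif f g finf ginf Hf Hg (eps / 2) ltac:(lra)) as [N HN].
    exists N. intros m Hm. unfold R_dist. rewrite Rminus_0_r.
    apply Rle_lt_trans with (eps / 2); [|lra].
    unfold riemann_prod, P. rewrite <- sumk_sub. pose proof (pow2_pos m).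
    eapply Rle_trans; [apply (sumk_abs_le_const _ (eps / 2 / 2 ^ m))|].
    - intros k Hk. unfold h, theta. destruct Rle_dec.
      + replace (f m (dyad m k) * g m (dyad m k) / 2 ^ m - finf (dyad m k) * ginf (dyad m k) / 2 ^ m)
          with ((f m (dyad m k) * g m (dyad m k) - finf (dyad m k) * ginf (dyad m k)) / 2 ^ m)
          by (field; lra).
        rewrite Rabs_div, (Rabs_pos_eq (2 ^ m)) by lra. unfold Rdiv.
        apply Rmult_le_compat_r; [left; apply Rinv_0_lt_compat; lra|].
        left. apply HN; [exact Hm | apply dyad_in01; lia].
      + unfold Rdiv. rewrite Rmult_0_l, Rminus_0_r, Rabs_R0.
        apply Rmult_le_pos; [lra | left; apply Rinv_0_lt_compat; lra].
    - rewrite INR_pow2. right. field. lra. }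
  apply (is_lim_seq_ext (fun m => P m + (riemann_prod f g m t - P m))); [intros; ring|].
  replace (Finite (RInt (fun s => finf s * ginf s) 0 t))
    with (Rbar_plus (RInt (fun s => finf s * ginf s) 0 t) 0) by (simpl; f_equal; ring).
  apply is_lim_seq_plus'; assumption.
Qed.

Section Covariation.

Variables (f g : nat -> R -> R) (finf ginf : R -> R).
Hypotheses (Hf : inF f finf) (Hg : inF g ginf).

Lemma covar_n_xf_succ m t :
  covar_n (xf f) (xf g) (S m) t =
  (covar_n (xf f) (xf g) m t + riemann_prod f g m t) / 2 + cut_error (xf f) (xf g) m t.
Proof.
  destruct (inF_bounded f finf Hf) as [Mf [_ [HMf _]]].
  destruct (inF_bounded g ginf Hg) as [Mg [_ [HMg _]]].
  rewrite covar_n_succ. do 3 f_equal. apply sumk_ext. intros k Hk.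
  rewrite (mid_defect_xf f Mf), (mid_defect_xf g Mg) by assumption.
  destruct Rle_dec; [|reflexivity].
  pose proof (sqrt_lt_R0 _ (pow2_pos m)) as Hs.
  pose proof (sqrt_sqrt _ (Rlt_le _ _ (pow2_pos m))) as Hss.
  set (s := sqrt (2 ^ m)) in *. rewrite <- Hss. field. lra.
Qed.

Lemma is_lim_seq_covar_n t : 0 <= t <= 1 ->
  is_lim_seq (fun n => covar_n (xf f) (xf g) n t) (RInt (fun s => finf s * ginf s) 0 t).
Proof.
  intros Ht.
  destruct (inF_bounded f finf Hf) as [Mf [_ [HMf _]]].
  destruct (inF_bounded g ginf Hg) as [Mg [_ [HMg _]]].
  destruct (xf_incr_bound f Mf HMf) as [Cx [HCx Hx]].
  destruct (xf_incr_bound g Mg HMg) as [Cy [HCy Hy]].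
  apply (is_lim_seq_avg_rec _ (fun m => riemann_prod f g m t) (fun m => cut_error (xf f) (xf g) m t)).
  - intros m. apply covar_n_xf_succ.
  - apply is_lim_seq_riemann_prod; assumption.
  - apply (is_lim_seq_geom_bound _ (Cx * Cy / 2)). intros m.
    eapply Rle_trans; [apply (cut_error_bound _ _ _ _ (Cx / sqrt (2 ^ S m)) (Cy / sqrt (2 ^ S m))); auto|].
    pose proof (sqrt_lt_R0 _ (pow2_pos (S m))) as Hs.
    pose proof (sqrt_sqrt _ (Rlt_le _ _ (pow2_pos (S m)))) as Hss.
    set (s := sqrt (2 ^ S m)) in *. right.
    replace (Cx / s * (Cy / s)) with (Cx * Cy / (s * s)) by (field; lra).
    rewrite Hss, pow_inv. simpl. field. apply pow_nonzero. lra.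
Qed.

Lemma cont01_RInt_mult : cont01 (fun t => RInt (fun s => finf s * ginf s) 0 t).
Proof.
  destruct (inF_bounded f finf Hf) as [Mf [HMf0 [_ HMf]]].
  destruct (inF_bounded g ginf Hg) as [Mg [HMg0 [_ HMg]]].
  apply (cont01_RInt _ (Mf * Mg)); [apply ex_RInt_mult; [apply Hf | apply Hg]|].
  intros s Hs. rewrite Rabs_mult. apply Rmult_le_compat; auto using Rabs_pos.
Qed.

End Covariation.

Lemma level_sum_lin f g a b n t :
  level_sum (fun n s => a * f n s + b * g n s) n t = a * level_sum f n t + b * level_sum g n t.
Proof. unfold level_sum, theta. rewrite <- !sumk_scal, <- sumk_add. apply sumk_ext. intros. ring. Qed.

Lemma inF_lin f g finf ginf a b : inF f finf -> inF g ginf ->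
  inF (fun n s => a * f n s + b * g n s) (fun s => a * finf s + b * ginf s).
Proof.
  intros Hf Hg.
  destruct (inF_bounded f finf Hf) as [Mf [_ [HMf _]]].
  destruct (inF_bounded g ginf Hg) as [Mg [_ [HMg _]]].
  pose proof (Rabs_pos a). pose proof (Rabs_pos b).
  split; [|split].
  - intros n. exists (Rabs a * Mf + Rabs b * Mg). intros t Ht.
    eapply Rle_trans; [apply Rabs_triang|]. rewrite !Rabs_mult.
    apply Rplus_le_compat; apply Rmult_le_compat_l; auto.
  - intros eps Heps. set (d := eps / (Rabs a + Rabs b + 1)).
    assert (Hd : 0 < d) by (apply Rdiv_lt_0_compat; lra).
    destruct (proj1 (proj2 Hf) d Hd) as [N1 H1]. destruct (proj1 (proj2 Hg) d Hd) as [N2 H2].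
    exists (N1 + N2)%nat. intros n t Hn Ht.
    specialize (H1 n t ltac:(lia) Ht). specialize (H2 n t ltac:(lia) Ht).
    replace (a * f n t + b * g n t - (a * finf t + b * ginf t))
      with (a * (f n t - finf t) + b * (g n t - ginf t)) by ring.
    eapply Rle_lt_trans; [apply Rabs_triang|]. rewrite !Rabs_mult.
    apply Rle_lt_trans with ((Rabs a + Rabs b) * d).
    + rewrite Rmult_plus_distr_r. apply Rplus_le_compat; apply Rmult_le_compat_l; lra.
    + unfold d. apply Rmult_lt_reg_r with (Rabs a + Rabs b + 1); [lra|].
      replace ((Rabs a + Rabs b) * (eps / (Rabs a + Rabs b + 1)) * (Rabs a + Rabs b + 1))
        with ((Rabs a + Rabs b) * eps) by (field; lra). nra.
  - apply (ex_RInt_plus (V := R_NormedModule) (fun s => a * finf s) (fun s => b * ginf s));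
      apply (ex_RInt_scal (V := R_NormedModule)); [apply Hf | apply Hg].
Qed.

Lemma xf_lin f g finf ginf a b t : inF f finf -> inF g ginf ->
  xf (fun n s => a * f n s + b * g n s) t = a * xf f t + b * xf g t.
Proof.
  intros Hf Hg.
  destruct (inF_bounded f finf Hf) as [Mf [_ [HMf _]]].
  destruct (inF_bounded g ginf Hg) as [Mg [_ [HMg _]]].
  change (Series (fun n => level_sum (fun n s => a * f n s + b * g n s) n t) =
          a * Series (fun n => level_sum f n t) + b * Series (fun n => level_sum g n t)).
  rewrite (Series_ext _ _ (fun n => level_sum_lin f g a b n t)).
  rewrite Series_plus, !Series_scal_l; [reflexivity | |];
    apply (ex_series_scal_l (V := R_NormedModule)); eapply ex_series_level_sum; eassumption.
Qed.

Theorem proposition2p4 :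
  (* (a) quadratic variation *)
  (forall (f : nat -> R -> R) (finf : R -> R), inF f finf ->
     (forall t, 0 <= t <= 1 ->
        is_lim_seq (fun n => qv_n (xf f) n t) (RInt (fun s => finf s ^ 2) 0 t)) /\
     cont01 (fun t => RInt (fun s => finf s ^ 2) 0 t)) /\
  (* (b) covariation *)
  (forall (f g : nat -> R -> R) (finf ginf : R -> R), inF f finf -> inF g ginf ->
     (forall t, 0 <= t <= 1 ->
        is_lim_seq (fun n => covar_n (xf f) (xf g) n t)
                   (RInt (fun s => finf s * ginf s) 0 t)) /\
     cont01 (fun t => RInt (fun s => finf s * ginf s) 0 t)) /\
  (* {x_f : f in F} is a vector space *)
  (exists f0 finf0, inF f0 finf0) /\
  (forall (f g : nat -> R -> R) (finf ginf : R -> R) (a b : R),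
     inF f finf -> inF g ginf ->
     exists (h : nat -> R -> R) (hinf : R -> R), inF h hinf /\
       forall t, 0 <= t <= 1 -> xf h t = a * xf f t + b * xf g t).
Proof.
  assert (Hcovar : forall f g finf ginf, inF f finf -> inF g ginf ->
     (forall t, 0 <= t <= 1 ->
        is_lim_seq (fun n => covar_n (xf f) (xf g) n t) (RInt (fun s => finf s * ginf s) 0 t)) /\
     cont01 (fun t => RInt (fun s => finf s * ginf s) 0 t)).
  { intros f g finf ginf Hf Hg. split; [apply (is_lim_seq_covar_n f g) | apply (cont01_RInt_mult f g)]; assumption. }
  split; [|split; [exact Hcovar | split]].
  - intros f finf Hf.
    replace (fun s => finf s ^ 2) with (fun s => finf s * finf s)
      by (apply functional_extensionality; intros; ring).
    exact (Hcovar f f finf finf Hf Hf).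
  - exists (fun _ _ => 0), (fun _ => 0). split; [|split].
    + intros n. exists 0. intros. rewrite Rabs_R0. lra.
    + intros eps Heps. exists 0%nat. intros. rewrite Rminus_0_r, Rabs_R0. exact Heps.
    + apply (ex_RInt_const (V := R_NormedModule)).
  - intros f g finf ginf a b Hf Hg.
    exists (fun n s => a * f n s + b * g n s), (fun s => a * finf s + b * ginf s).
    split; [apply inF_lin; assumption|]. intros t _. apply (xf_lin f g finf ginf); assumption.
Qed.
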